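(* Let $A$ be a monotone complete C*-algebra and $M\subseteq N$ Hilbert $A$-modules with $M^\perp_N=\{0\}$, and regard $K_A(M)\subseteq K_A(N)$ via $\theta_{x,y}\mapsto\theta_{x,y}$ ($x,y\in M$). If $T\in\mathrm{End}^*_A(N)$ satisfies $\theta_{x,y}T=0$ for all $x,y\in M$, or $T\theta_{x,y}=0$ for all $x,y\in M$, then $T=0$.
   Context: A monotone complete C*-algebra is a unital C*-algebra in which every norm-bounded increasing net of self-adjoint elements has a supremum. $M^\perp_N=\{y\in N:\langle x,y\rangle=0\ \forall x\in M\}$. $\theta_{x,y}(z)=y\langle x,z\rangle$; $K_A(M)$ is the norm-closed span of such operators; $\mathrm{End}^*_A(N)$ is the C*-algebra of bounded adjointable $A$-linear operators on $N$. *)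

From mathcomp Require Import all_boot all_order all_algebra.
From mathcomp Require Import reals complex.
Set Implicit Arguments. Unset Strict Implicit. Unset Printing Implicit Defensive.
Import Order.TTheory GRing.Theory Num.Theory.
Local Open Scope ring_scope.

Section CStar.
Variable R : realType.
Local Notation C := R[i].

Section Alg.
Variables (A : algType C) (star : A -> A) (nrm : A -> R).

Definition cauchy_seq {T : Type} (d : T -> T -> R) (u : nat -> T) : Prop :=
  forall e : R, 0 < e -> exists N : nat,
    forall m n : nat, (N <= m)%N -> (N <= n)%N -> d (u m) (u n) < e.

Definition converges_to {T : Type} (d : T -> T -> R) (u : nat -> T) (l : T) : Prop :=
  forall e : R, 0 < e -> exists N : nat, forall n : nat, (N <= n)%N -> d (u n) l < e.

Definition nrm_dist (a b : A) : R := nrm (a - b).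

Definition is_cstar_algebra : Prop :=
  (
      (forall a b, star (a + b) = star a + star b) /\
      (forall (c : C) a, star (c *: a) = Num.conj c *: star a) /\
      (forall a b, star (a * b) = star b * star a) /\
      (forall a, star (star a) = a)) /\
    (
      (forall a, 0 <= nrm a) /\ (forall a, nrm a = 0 -> a = 0) /\
      (forall a b, nrm (a + b) <= nrm a + nrm b) /\
      (forall (c : C) a, real_complex R (nrm (c *: a)) = `|c| * real_complex R (nrm a)) /\
      (forall a b, nrm (a * b) <= nrm a * nrm b) /\
      (forall a, nrm (star a * a) = nrm a ^+ 2)) /\
      (forall u : nat -> A, cauchy_seq nrm_dist u ->
         exists l, converges_to nrm_dist u l).

Definition self_adjoint (a : A) : Prop := star a = a.
Definition positive (a : A) : Prop := exists b : A, a = star b * b.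
Definition cle (a b : A) : Prop := positive (b - a).

Definition directed (I : Type) (le : I -> I -> Prop) : Prop :=
  [/\ inhabited I, (forall i, le i i),
      (forall i j k, le i j -> le j k -> le i k)
    & (forall i j, exists k, le i k /\ le j k)].

Definition monotone_complete : Prop :=
  forall (I : Type) (le : I -> I -> Prop) (x : I -> A),
    directed le ->
    (forall i, self_adjoint (x i)) ->
    (forall i j, le i j -> cle (x i) (x j)) ->
    (exists K : R, forall i, nrm (x i) <= K) ->
    exists s : A, [/\ self_adjoint s,
      (forall i, cle (x i) s)
    & (forall t, self_adjoint t -> (forall i, cle (x i) t) -> cle s t)].

Definition monotone_complete_cstar_algebra : Prop :=
  is_cstar_algebra /\ monotone_complete.

Section Module.
Variables (N : lmodType C) (act : N -> A -> N) (ip : N -> N -> A).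

(* squared distance ||x - y||^2 = ||<x-y,x-y>|| ; Cauchy/convergence for
   the squared distance is the same as for the distance itself *)
Definition mod_dist2 (x y : N) : R := nrm (ip (x - y) (x - y)).

Definition is_hilbert_module : Prop :=
  (
      (forall x, act x 1 = x) /\
      (forall x a b, act (act x a) b = act x (a * b)) /\
      (forall x y a, act (x + y) a = act x a + act y a) /\
      (forall x a b, act x (a + b) = act x a + act x b) /\
      (forall (c : C) x a, act (c *: x) a = c *: act x a /\ act x (c *: a) = c *: act x a)) /\
    (
      (forall x y z, ip x (y + z) = ip x y + ip x z) /\
      (forall (c : C) x y, ip x (c *: y) = c *: ip x y) /\
      (forall x y a, ip x (act y a) = ip x y * a) /\
      (forall x y, star (ip x y) = ip y x) /\
      (forall x, positive (ip x x)) /\ (forall x, ip x x = 0 -> x = 0)) /\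
      (forall u : nat -> N, cauchy_seq mod_dist2 u ->
         exists l, converges_to mod_dist2 u l).

Definition hilbert_submodule (M : N -> Prop) : Prop :=
  [/\ M 0,
      (forall x y, M x -> M y -> M (x + y)),
      (forall (c : C) x, M x -> M (c *: x)),
      (forall x a, M x -> M (act x a))
    & (forall (u : nat -> N) l, (forall n, M (u n)) ->
         converges_to mod_dist2 u l -> M l)].

Definition trivial_orth_complement (M : N -> Prop) : Prop :=
  forall y : N, (forall x, M x -> ip x y = 0) -> y = 0.

Definition theta (x y : N) : N -> N := fun z => act y (ip x z).

Definition adjointable_op (T : N -> N) : Prop :=
  [/\ (forall x y, T (x + y) = T x + T y),
      (forall (c : C) x, T (c *: x) = c *: T x),
      (forall x a, T (act x a) = act (T x) a),
      (exists K : R, forall x, mod_dist2 (T x) 0 <= K * mod_dist2 x 0)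
    & (exists Ts : N -> N, forall x y, ip (T x) y = ip x (Ts y))].

End Module.
End Alg.
End CStar.

(* In a C*-algebra [b^* b = 0] forces [b = 0], so in a Hilbert module
   [<w, theta_{x,x} w> = <x,w>^* <x,w>] vanishes only when [<x,w> = 0].
   If [theta_{x,x} T = 0] for all [x] in [M], then [T z] is orthogonal to [M],
   hence zero.  If [T theta_{y,y} = 0], evaluating at [T^* T y] gives
   [theta_{Ty,Ty} (T y) = 0], so [T] vanishes on [M]; then the range of [T^*]
   is orthogonal to [M], so [T^* = 0] and [<Tz, Tz> = <z, T^* T z> = 0]. *)
From mathcomp Require Import all_boot all_order all_algebra.
From mathcomp Require Import reals complex.
Import GRing.Theory Num.Theory.
Set Implicit Arguments.
Unset Strict Implicit.
Unset Printing Implicit Defensive.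

Local Open Scope ring_scope.

Lemma additive_map0 (U V : zmodType) (f : U -> V) :
  (forall a b, f (a + b) = f a + f b) -> f 0 = 0.
Proof.
by move=> fD; apply: (addrI (f 0)); rewrite -fD !addr0.
Qed.

Section CStarAlgebra.
Variables (R : realType) (A : algType R[i]) (star : A -> A) (nrm : A -> R).
Hypothesis cstarA : is_cstar_algebra star nrm.

Lemma cstar_star0 : star 0 = 0.
Proof. by case: cstarA => [[starD _] _]; apply: additive_map0. Qed.

Lemma cstar_nrm0 : nrm 0 = 0.
Proof.
case: cstarA => _ [[_ [_ [_ [nrmZ _]]]] _].
by apply: (@complexI R); rewrite -(scale0r (0 : A)) nrmZ normr0 mul0r.
Qed.

Lemma cstar_star_mul_eq0 (b : A) : star b * b = 0 -> b = 0.
Proof.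
case: cstarA => _ [[_ [nrm_eq0 [_ [_ [_ nrm_cstar]]]]] _] bb0.
apply: nrm_eq0; apply/eqP; rewrite -sqrf_eq0 -nrm_cstar bb0.
by rewrite cstar_nrm0.
Qed.

Section HilbertModule.
Variables (N : lmodType R[i]) (act : N -> A -> N) (ip : N -> N -> A).
Hypothesis hilbertN : is_hilbert_module star nrm act ip.

Lemma ipr0 (w : N) : ip w 0 = 0.
Proof.
by case: hilbertN => _ [[ipD _] _]; exact: (@additive_map0 _ _ (ip w) (ipD w)).
Qed.

Lemma ip0l (w : N) : ip 0 w = 0.
Proof.
by case: hilbertN => _ [[_ [_ [_ [ip_star _]]]] _]; rewrite -ip_star ipr0 cstar_star0.
Qed.

Lemma ip_eq0 (w : N) : ip w w = 0 -> w = 0.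
Proof. by case: hilbertN => _ [[_ [_ [_ [_ [_ ip_def]]]]] _]; apply: ip_def. Qed.

Lemma ip_theta_diag (x w : N) :
  ip w (theta act ip x x w) = star (ip x w) * ip x w.
Proof.
by case: hilbertN => _ [[_ [_ [ipM [ip_star _]]]] _]; rewrite /theta ipM ip_star.
Qed.

Lemma theta_diag_eq0 (x w : N) : theta act ip x x w = 0 -> ip x w = 0.
Proof. by move=> theta0; apply: cstar_star_mul_eq0; rewrite -ip_theta_diag theta0 ipr0. Qed.

Lemma theta_diag_self_eq0 (w : N) : theta act ip w w w = 0 -> w = 0.
Proof. by move=> /theta_diag_eq0; apply: ip_eq0. Qed.

Variables (M : N -> Prop) (T Ts : N -> N).
Hypothesis orthM : trivial_orth_complement ip M.
Hypothesis T_act : forall x a, T (act x a) = act (T x) a.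
Hypothesis T_adjoint : forall x y, ip (T x) y = ip x (Ts y).

Lemma eq0_of_theta_diag_eq0 (w : N) :
  (forall x, M x -> theta act ip x x w = 0) -> w = 0.
Proof. by move=> theta0; apply: orthM => x Mx; apply: theta_diag_eq0; apply: theta0. Qed.

Lemma op_theta_diag_adjoint (y : N) :
  T (theta act ip y y (Ts (T y))) = theta act ip (T y) (T y) (T y).
Proof. by rewrite /theta T_act -T_adjoint. Qed.

Lemma op_eq0_of_eq0_on (T0M : forall y, M y -> T y = 0) (z : N) : T z = 0.
Proof.
have Ts0 u : Ts u = 0.
  by apply: orthM => x Mx; rewrite -T_adjoint T0M // ip0l.
by apply: ip_eq0; rewrite T_adjoint Ts0 ipr0.
Qed.

End HilbertModule.
End CStarAlgebra.

Theorem proposition2p6 (R : realType) (A : algType R[i]) (star : A -> A) (nrm : A -> R)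
    (N : lmodType R[i]) (act : N -> A -> N) (ip : N -> N -> A)
    (M : N -> Prop) (T : N -> N) :
  monotone_complete_cstar_algebra star nrm ->
  is_hilbert_module star nrm act ip ->
  hilbert_submodule nrm act ip M ->
  trivial_orth_complement ip M ->
  adjointable_op nrm act ip T ->
  (forall x y, M x -> M y -> forall z, theta act ip x y (T z) = 0) \/
  (forall x y, M x -> M y -> forall z, T (theta act ip x y z) = 0) ->
  forall z, T z = 0.
Proof.
move=> [cstarA _] hilbertN _ orthM [_ _ T_act _ [Ts T_adjoint]] [thetaT0 | Ttheta0] z.
- by apply: (eq0_of_theta_diag_eq0 cstarA hilbertN orthM) => x Mx; apply: thetaT0.
- apply: (op_eq0_of_eq0_on cstarA hilbertN orthM T_adjoint) => y My.
  apply: (theta_diag_self_eq0 cstarA hilbertN).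
  by rewrite -(op_theta_diag_adjoint T_act T_adjoint) Ttheta0.
Qed.
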